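(* Let $s\ge 1$, let $\boldsymbol\xi=(\xi_1,\dots,\xi_\ell)$ consist of representatives of pairwise distinct nontrivial conjugacy classes of $\mathbb{F}_{q^m}$, let $\mathbf n=(n_1,\dots,n_\ell)$ be a length partition of $n$, and let $\boldsymbol\beta_1,\dots,\boldsymbol\beta_s\in\mathbb{F}_{q^m}^n$ be such that every block $\boldsymbol\beta_j^{(i)}\in\mathbb{F}_{q^m}^{n_i}$ has $\mathbb{F}_q$-linearly independent entries. Let $\mathbf c=(\mathbf c_1\mid\dots\mid\mathbf c_s)$ be a codeword of the HILRS code with these parameters and dimension $sk$, with message-polynomial vector $(f_1,\dots,f_s)$, i.e. $f_j\in\mathbb{F}_{q^m}[x;\theta,\delta]_{<k}$ and $\mathbf c_j=f_j(\boldsymbol\beta_j)_{\boldsymbol\xi}$ for all $j$. Let $\mathbf y=\mathbf c+\mathbf e\in\mathbb{F}_{q^m}^{sn}$, where $\mathbf e=(\mathbf e_1\mid\dots\mid\mathbf e_s)$ has sum-rank weight $t$ (with respect to the block-ordered partition), and let $\sigma\in\mathbb{F}_{q^m}[x;\theta,\delta]$ be the error-span polynomial of $\mathbf e$. For $j=1,\dots,s$ let $G_j$ be the minimal skew polynomial of $\boldsymbol\beta_j$ with respect to $\boldsymbol\xi$, and let $R_j$ be the interpolation polynomial with $\deg R_j<n$ and $R_j(\boldsymbol\beta_j)_{\boldsymbol\xi}=\mathbf y_j$. Then $$\sigma\cdot R_j\equiv \sigma\cdot f_j \bmod_r G_j\qquad\text{for all } j=1,\dots,s.$$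
   Context: Let $q$ be a prime power, $m\ge 1$, and $\theta$ an automorphism of $\mathbb{F}_{q^m}$ with fixed field $\mathbb{F}_q$. Let $\delta:\mathbb{F}_{q^m}\to\mathbb{F}_{q^m}$ be a $\theta$-derivation, i.e. $\delta(a+b)=\delta(a)+\delta(b)$ and $\delta(ab)=\delta(a)b+\theta(a)\delta(b)$. Elements $a,b\in\mathbb{F}_{q^m}$ are conjugate if $b=\theta(c)ac^{-1}+\delta(c)c^{-1}$ for some $c\ne0$; the conjugacy class of $0$ is called trivial. The skew polynomial ring $\mathbb{F}_{q^m}[x;\theta,\delta]$ consists of polynomials $\sum_i f_ix^{i-1}$ ($f_i\in\mathbb{F}_{q^m}$, finitely many nonzero) with ordinary addition and multiplication determined by $xa=\theta(a)x+\delta(a)$; $\mathbb{F}_{q^m}[x;\theta,\delta]_{<k}$ is the set of those of degree $<k$. For $g\neq 0$, $f\bmod_r g$ denotes the unique $r$ with $\deg r<\deg g$ and $f=Qg+r$ for some $Q$ (right division), and $f\equiv h\bmod_r g$ means $f\bmod_r g=h\bmod_r g$. For $a,b\in\mathbb{F}_{q^m}$ set $\mathcal D_a(b):=\theta(b)a+\delta(b)$, $\mathcal D_a^0(b)=b$, $\mathcal D_a^i(b)=\mathcal D_a(\mathcal D_a^{i-1}(b))$. The generalized operator evaluation of $f=\sum_{i=1}^d f_ix^{i-1}$ at $b$ with respect to $a$ is $f(b)_a:=\sum_{i=1}^d f_i\mathcal D_a^{i-1}(b)$. A length partition of $n$ is $\mathbf n=(n_1,\dots,n_\ell)$ of positive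 integers with sum $n$; a vector $\mathbf x\in\mathbb{F}_{q^m}^n$ is written in blocks $\mathbf x=(\mathbf x^{(1)}\mid\dots\mid\mathbf x^{(\ell)})$, $\mathbf x^{(i)}\in\mathbb{F}_{q^m}^{n_i}$, and for $\mathbf a=(a_1,\dots,a_\ell)$ one writes $f(\mathbf x)_{\mathbf a}:=(f(\mathbf x^{(1)})_{a_1}\mid\dots\mid f(\mathbf x^{(\ell)})_{a_\ell})$ (entrywise evaluation in each block). The LRS code $\mathrm{LRS}[\boldsymbol\beta,\boldsymbol\xi;\mathbf n,k]$ is $\{f(\boldsymbol\beta)_{\boldsymbol\xi}: f\in\mathbb{F}_{q^m}[x;\theta,\delta]_{<k}\}$; the HILRS code of interleaving order $s$ with code locators $(\boldsymbol\beta_1\mid\dots\mid\boldsymbol\beta_s)$ and dimension $sk$ is $\{(\mathbf c_1\mid\dots\mid\mathbf c_s)\in\mathbb{F}_{q^m}^{sn}:\mathbf c_j\in\mathrm{LRS}[\boldsymbol\beta_j,\boldsymbol\xi;\mathbf n,k]\ \forall j\}$. For $\mathbf x=(\mathbf x_1\mid\dots\mid\mathbf x_s)\in\mathbb{F}_{q^m}^{sn}$ with each $\mathbf x_j$ split in blocks according to $\mathbf n$, its sum-rank weight (block-ordered partition) is $\mathrm{wt}_{\Sigma R}(\mathbf x)=\sum_{i=1}^\ell\mathrm{rk}_q(\mathbf x_1^{(i)}\mid\dots\mid\mathbf x_s^{(i)})$, where $\mathrm{rk}_q$ is the maximal number of $\mathbb{F}_q$-linearly independent entries. Error decomposition: if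 $t_i=\mathrm{rk}_q(\mathbf e_1^{(i)}\mid\dots\mid\mathbf e_s^{(i)})$, there are $\mathbf a^{(i)}\in\mathbb{F}_{q^m}^{t_i}$ with $\mathbb{F}_q$-linearly independent entries and $\mathbf B_j^{(i)}\in\mathbb{F}_q^{t_i\times n_i}$ with $\mathrm{rk}(\mathbf B_1^{(i)}\mid\dots\mid\mathbf B_s^{(i)})=t_i$ and $\mathbf e_j^{(i)}=\mathbf a^{(i)}\mathbf B_j^{(i)}$ for all $i,j$; the entries of $\mathbf a^{(i)}$ are the error values. The error-span polynomial $\sigma$ is the monic nonzero skew polynomial of least degree with $\sigma(\mathbf a^{(i)})_{\xi_i}=\mathbf 0$ for all $i=1,\dots,\ell$. The minimal skew polynomial of $\boldsymbol\beta_j$ with respect to $\boldsymbol\xi$ is the monic nonzero skew polynomial $G_j$ of least degree with $G_j(\boldsymbol\beta_j^{(i)})_{\xi_i}=\mathbf 0$ for all $i$. *)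

From HB Require Import structures.
From mathcomp Require Import all_boot all_order all_algebra all_field.
Set Implicit Arguments. Unset Strict Implicit. Unset Printing Implicit Defensive.
Import Order.TTheory GRing.Theory.
Local Open Scope ring_scope.

Section Skew.
Variables (F : finFieldType) (theta : {rmorphism F -> F}) (delta : F -> F).

(* A skew polynomial sum_i f_i x^i is represented by its coefficient list,
   stored in {poly F}; only the additive structure and size/lead_coef/monic
   of {poly F} are used. *)

(* left multiplication by x:  x * (sum g_k x^k) = sum theta(g_k) x^{k+1} + delta(g_k) x^k *)
Definition skew_mulX (g : {poly F}) : {poly F} :=
  map_poly theta g * 'X + \poly_(k < size g) delta g`_k.

Definition smul (f g : {poly F}) : {poly F} :=
  \sum_(i < size f) f`_i *: iter i skew_mulX g.

Definition is_rrem (f g r : {poly F}) : Prop :=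
  (size r < size g)%N /\ exists Q, f = smul Q g + r.

Definition congr_r (f h g : {poly F}) : Prop :=
  exists r, is_rrem f g r /\ is_rrem h g r.

Definition Dop (a b : F) : F := theta b * a + delta b.

Definition opeval (f : {poly F}) (a b : F) : F :=
  \sum_(i < size f) f`_i * iter i (Dop a) b.

Definition skew_conj (a b : F) : Prop :=
  exists c : F, c != 0 /\ b = theta c * a / c + delta c / c.

(* F_q = fixed field of theta.  Linear independence over F_q of the entries
   of v indexed by S. *)
Definition fq_indep (T : finType) (v : T -> F) (S : {set T}) : bool :=
  [forall lam : {ffun T -> F},
     ([forall k, theta (lam k) == lam k] && (\sum_(k in S) lam k * v k == 0))
     ==> [forall k in S, lam k == 0]].

Definition rkq (T : finType) (v : T -> F) : nat :=
  \max_(S : {set T} | fq_indep v S) #|S|.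

Definition bev (l : nat) (nn : 'I_l -> nat) (xi : 'I_l -> F)
  (f : {poly F}) (beta : forall i : 'I_l, 'rV[F]_(nn i)) :
  forall i : 'I_l, 'rV[F]_(nn i) :=
  fun i => \row_k opeval f (xi i) (beta i ord0 k).

Definition sumrank_wt (s l : nat) (nn : 'I_l -> nat)
  (x : 'I_s -> forall i : 'I_l, 'rV[F]_(nn i)) : nat :=
  \sum_(i < l) rkq (fun p : 'I_s * 'I_(nn i) => x p.1 i ord0 p.2).

Definition minimal_monic (P : {poly F} -> Prop) (g : {poly F}) : Prop :=
  g \is monic /\ P g /\ forall h : {poly F}, h != 0 -> P h -> (size g <= size h)%N.

End Skew.

(* Operator evaluation turns the skew product into composition,
   (g * h)(b)_a = g(h(b)_a)_a, and it is linear in b over the fixed field of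
   theta, because a theta-derivation of a finite field vanishes there.
   Every error entry e_j^(i) is such a combination of error values, which are
   roots of sigma, so sigma * R_j - sigma * f_j evaluates at beta_j to
   sigma(y_j) - sigma(c_j) = sigma(e_j) = 0.  The skew polynomials vanishing
   at beta_j form a left ideal whose monic member of least degree is G_j, and
   two polynomials whose difference lies in it have the same right remainder
   modulo G_j. *)
From HB Require Import structures.
From mathcomp Require Import all_boot all_order all_algebra all_field fingroup cyclic ring.
Set Implicit Arguments. Unset Strict Implicit. Unset Printing Implicit Defensive.
Import GRing.Theory FinRing.Theory.
Local Open Scope ring_scope.

Lemma natr_card (R : finNzRingType) : (#|R|%:R : R) = 0.
Proof. by apply/eqP; rewrite -zmodXgE -order_dvdn -cardsT order_dvdG ?inE. Qed.

Lemma size_polyB_lead_lt (R : nzRingType) (p q : {poly R}) :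
  p != 0 -> size q = size p -> lead_coef q = lead_coef p -> (size (p - q)%R < size p)%N.
Proof.
move=> p0 szq lcq.
have : (size (p - q)%R <= size p)%N.
  by rewrite (leq_trans (size_polyD _ _)) // size_polyN szq maxnn.
rewrite leq_eqVlt => /orP[/eqP szpq | //].
have : lead_coef (p - q) = 0.
  by rewrite lead_coefE szpq coefB -[X in X - _]lead_coefE -szq -lead_coefE lcq subrr.
move/eqP; rewrite lead_coef_eq0 => /eqP pq0.
by move: szpq; rewrite pq0 size_poly0 => /esym/eqP; rewrite size_poly_eq0 (negPf p0).
Qed.

Section SkewPolynomials.
Variables (F : finFieldType) (theta : {rmorphism F -> F}) (delta : F -> F).
Hypothesis deltaD : forall u v : F, delta (u + v) = delta u + delta v.
Hypothesis deltaM : forall u v : F, delta (u * v) = delta u * v + theta u * delta v.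

Local Notation X := (skew_mulX theta delta).
Local Notation sm := (smul theta delta).
Local Notation D := (Dop theta delta).
Local Notation ev := (opeval theta delta).

Lemma delta0 : delta 0 = 0.
Proof. by apply: (addrI (delta 0)); rewrite -deltaD !addr0. Qed.

(* Leibniz rule for powers at n.+1 = #|F|, where l ^+ #|F| = l and #|F| = 0 in F. *)
Lemma delta_fixed (l : F) : theta l = l -> delta l = 0.
Proof.
move=> thl.
have deltaX n : delta (l ^+ n.+1) = n.+1%:R * l ^+ n * delta l.
  elim: n => [|n IHn]; first by rewrite expr1 expr0 mulr1 mul1r.
  rewrite [l ^+ n.+2]exprSr deltaM IHn rmorphXn thl exprSr; ring.
have := deltaX #|F|.-1.
by rewrite (prednK (ltnW (finNzRing_gt1 F))) expf_card natr_card !mul0r.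
Qed.

Lemma Dop0 (a : F) : D a 0 = 0.
Proof. by rewrite /Dop rmorph0 mul0r delta0 addr0. Qed.

Lemma DopD (a u v : F) : D a (u + v) = D a u + D a v.
Proof. rewrite /Dop rmorphD mulrDl deltaD; ring. Qed.

Lemma DopZ_fixed (a l u : F) : theta l = l -> D a (l * u) = l * D a u.
Proof. by move=> thl; rewrite /Dop rmorphM deltaM delta_fixed // thl; ring. Qed.

Lemma Dop_sum (a : F) I (r : seq I) (P : pred I) (u : I -> F) :
  D a (\sum_(i <- r | P i) u i) = \sum_(i <- r | P i) D a (u i).
Proof. exact: (big_morph (D a) (DopD a) (Dop0 a)). Qed.

Lemma opeval_widen (f : {poly F}) (a b : F) N : (size f <= N)%N ->
  ev f a b = \sum_(i < N) f`_i * iter i (D a) b.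
Proof.
move=> szf; rewrite /opeval (big_ord_widen N (fun i => f`_i * iter i (D a) b) szf).
rewrite big_mkcond; apply: eq_bigr => i _; case: ltnP => // le_f_i.
by rewrite nth_default ?mul0r.
Qed.

Lemma opeval0 (a b : F) : ev 0 a b = 0.
Proof. by rewrite /opeval size_poly0 big_ord0. Qed.

Lemma opevalD (f g : {poly F}) (a b : F) : ev (f + g) a b = ev f a b + ev g a b.
Proof.
rewrite !(@opeval_widen _ _ _ (maxn (size f) (size g))) ?size_polyD ?leq_maxl ?leq_maxr //.
by rewrite -big_split; apply: eq_bigr => i _; rewrite coefD mulrDl.
Qed.

Lemma opevalZ c (f : {poly F}) (a b : F) : ev (c *: f) a b = c * ev f a b.
Proof.
rewrite !(@opeval_widen _ _ _ (size f)) ?size_scale_leq // mulr_sumr.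
by apply: eq_bigr => i _; rewrite coefZ mulrA.
Qed.

Lemma opevalB (f g : {poly F}) (a b : F) : ev (f - g) a b = ev f a b - ev g a b.
Proof. by rewrite opevalD -scaleN1r opevalZ mulN1r. Qed.

Lemma opeval_sum I (r : seq I) (P : pred I) (f : I -> {poly F}) (a b : F) :
  ev (\sum_(i <- r | P i) f i) a b = \sum_(i <- r | P i) ev (f i) a b.
Proof.
exact: (big_morph (fun g => ev g a b) (fun g h => opevalD g h a b) (opeval0 a b)).
Qed.

Lemma opeval_pt0 (f : {poly F}) (a : F) : ev f a 0 = 0.
Proof.
rewrite /opeval big1 // => i _.
suff -> : iter i (D a) 0 = 0 by rewrite mulr0.
by elim: (i : nat) => //= n ->; rewrite Dop0.
Qed.

Lemma opeval_ptD (f : {poly F}) (a u v : F) : ev f a (u + v) = ev f a u + ev f a v.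
Proof.
rewrite /opeval -big_split; apply: eq_bigr => i _ /=.
by rewrite -mulrDr; congr (_ * _); elim: (i : nat) => //= n ->; rewrite DopD.
Qed.

Lemma opeval_pt_sum (f : {poly F}) (a : F) I (r : seq I) (P : pred I) (u : I -> F) :
  ev f a (\sum_(i <- r | P i) u i) = \sum_(i <- r | P i) ev f a (u i).
Proof. exact: (big_morph (ev f a) (opeval_ptD f a) (opeval_pt0 f a)). Qed.

Lemma opeval_ptZ_fixed (f : {poly F}) (a l u : F) :
  theta l = l -> ev f a (l * u) = l * ev f a u.
Proof.
move=> thl; rewrite /opeval mulr_sumr; apply: eq_bigr => i _.
by rewrite mulrCA; congr (_ * _); elim: (i : nat) => //= n ->; rewrite DopZ_fixed.
Qed.

Lemma opeval_fixed_comb_root (I : finType) (f : {poly F}) (a : F) (u lam : I -> F) :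
  (forall i, ev f a (u i) = 0) -> (forall i, theta (lam i) = lam i) ->
  ev f a (\sum_i u i * lam i) = 0.
Proof.
move=> root_u fixed_lam; rewrite opeval_pt_sum big1 // => i _.
by rewrite mulrC opeval_ptZ_fixed // root_u mulr0.
Qed.

Lemma opeval_skew_mulX (g : {poly F}) (a b : F) : ev (X g) a b = D a (ev g a b).
Proof.
rewrite /skew_mulX opevalD (@opeval_widen _ _ _ (size g).+1); last first.
  by rewrite (leq_trans (size_polyMleq _ _)) // size_polyX size_map_poly addn2.
rewrite big_ord_recl coefMX eqxx mul0r add0r (@opeval_widen _ _ _ (size g)) ?size_poly //.
rewrite /opeval Dop_sum -big_split; apply: eq_bigr => i _ /=.
by rewrite coefMX /= coef_map coef_poly ltn_ord /Dop rmorphM deltaM /=; ring.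
Qed.

Lemma opeval_smul (f g : {poly F}) (a b : F) : ev (sm f g) a b = ev f a (ev g a b).
Proof.
rewrite /smul opeval_sum; apply: eq_bigr => i _; rewrite opevalZ; congr (_ * _).
by elim: (i : nat) => //= n IHn; rewrite opeval_skew_mulX IHn.
Qed.

Lemma smul_widen (f g : {poly F}) N :
  (size f <= N)%N -> sm f g = \sum_(i < N) f`_i *: iter i X g.
Proof.
move=> szf; rewrite /smul (big_ord_widen N (fun i => f`_i *: iter i X g) szf).
rewrite big_mkcond; apply: eq_bigr => i _; case: ltnP => // le_f_i.
by rewrite nth_default ?scale0r.
Qed.

Lemma smul0l (g : {poly F}) : sm 0 g = 0.
Proof. by rewrite /smul size_poly0 big_ord0. Qed.

Lemma smulDl (f h g : {poly F}) : sm (f + h) g = sm f g + sm h g.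
Proof.
rewrite !(@smul_widen _ _ (maxn (size f) (size h))) ?size_polyD ?leq_maxl ?leq_maxr //.
by rewrite -big_split; apply: eq_bigr => i _; rewrite coefD scalerDl.
Qed.

Lemma smul_scaleXn c d (g : {poly F}) : sm (c *: 'X^d) g = c *: iter d X g.
Proof.
rewrite (@smul_widen _ _ d.+1); last first.
  by rewrite (leq_trans (size_scale_leq _ _)) ?size_polyXn.
rewrite big_ord_recr /= big1 ?add0r; last first.
  by move=> i _; rewrite coefZ coefXn (ltn_eqF (ltn_ord i)) mulr0 scale0r.
by rewrite coefZ coefXn eqxx mulr1.
Qed.

Lemma size_skew_mulX_delta_lt (g : {poly F}) :
  g != 0 -> (size (\poly_(k < size g) delta g`_k)%R < size (map_poly theta g * 'X)%R)%N.
Proof. by move=> g0; rewrite size_mulX ?map_poly_eq0 // size_map_poly ltnS size_poly. Qed.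

Lemma size_skew_mulX (g : {poly F}) : g != 0 -> size (X g) = (size g).+1.
Proof.
move=> g0; rewrite /skew_mulX size_polyDl ?size_skew_mulX_delta_lt //.
by rewrite size_mulX ?map_poly_eq0 // size_map_poly.
Qed.

Lemma skew_mulX_monic (g : {poly F}) : g \is monic -> X g \is monic.
Proof.
move=> mong; have g0 := monic_neq0 mong.
rewrite monicE /skew_mulX lead_coefDl ?size_skew_mulX_delta_lt //.
by rewrite lead_coefMX lead_coef_map (eqP mong) rmorph1.
Qed.

Lemma iter_skew_mulX_monic n (g : {poly F}) :
  g \is monic -> iter n X g \is monic /\ size (iter n X g) = (size g + n)%N.
Proof.
move=> mong; elim: n => [|n [monXn szXn]] /=; first by rewrite addn0.
by rewrite skew_mulX_monic // size_skew_mulX ?monic_neq0 // szXn addnS.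
Qed.

(* Long division: subtracting lead_coef P *: x^(deg P - deg G) * G cancels the
   leading term of P because x^d * G stays monic of degree deg G + d. *)
Lemma is_rrem_exists (G P : {poly F}) :
  G \is monic -> exists r, is_rrem theta delta P G r.
Proof.
move=> monG; have [n] := ubnP (size P); elim: n P => // n IHn P szP.
have [ltPG | leGP] := ltnP (size P) (size G).
  by exists P; split => //; exists 0; rewrite smul0l add0r.
pose d := (size P - size G)%N; pose c := lead_coef P.
have P0 : P != 0 by rewrite -size_poly_gt0 (leq_trans _ leGP) // size_poly_gt0 monic_neq0.
have [monXG szXG] := iter_skew_mulX_monic d monG.
have szcXG : size (c *: iter d X G) = size P.
  by rewrite size_scale ?lead_coef_eq0 // szXG subnKC.
have lccXG : lead_coef (c *: iter d X G) = c by rewrite lead_coefZ (eqP monXG) mulr1.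
have [|r [szr [Q eQ]]] := IHn (P - c *: iter d X G).
  by rewrite -ltnS (leq_trans _ szP) // ltnS size_polyB_lead_lt.
exists r; split => //; exists (Q + c *: 'X^d).
by rewrite smulDl smul_scaleXn addrAC -eQ subrK.
Qed.

Lemma minimal_monic_congr_r (P : {poly F} -> Prop) (G p q : {poly F}) :
  minimal_monic P G ->
  (forall g h, P g -> P h -> P (g - h)) -> (forall Q g, P g -> P (sm Q g)) ->
  P (p - q) -> congr_r theta delta p q G.
Proof.
move=> [monG [PG minG]] PB Psm Ppq.
have [r1 [szr1 [Q1 eQ1]]] := is_rrem_exists p monG.
have [r2 [szr2 [Q2 eQ2]]] := is_rrem_exists q monG.
suff r12 : r1 = r2.
  by exists r1; split; split=> //; [exists Q1 | exists Q2; rewrite r12].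
have Pr12 : P (r1 - r2).
  have -> : r1 - r2 = (p - q) - (sm Q1 G - sm Q2 G) by rewrite eQ1 eQ2; ring.
  exact: PB Ppq (PB _ _ (Psm Q1 G PG) (Psm Q2 G PG)).
have szr12 : (size (r1 - r2)%R < size G)%N.
  by rewrite (leq_ltn_trans (size_polyD _ _)) // size_polyN gtn_max szr1.
apply/eqP; rewrite -subr_eq0; apply: contraLR szr12 => r12_neq0.
by rewrite -leqNgt minG.
Qed.

End SkewPolynomials.

Theorem theorem1
  (F : finFieldType) (theta : {rmorphism F -> F}) (delta : F -> F)
  (delta_add : forall u v : F, delta (u + v) = delta u + delta v)
  (delta_mul : forall u v : F, delta (u * v) = delta u * v + theta u * delta v)
  (s l k : nat) (hs : (0 < s)%N)
  (nn : 'I_l -> nat) (hnn : forall i, (0 < nn i)%N)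
  (xi : 'I_l -> F)
  (xi_nontriv : forall i, ~ skew_conj theta delta 0 (xi i))
  (xi_dist : forall i i', i != i' -> ~ skew_conj theta delta (xi i) (xi i'))
  (beta : 'I_s -> forall i : 'I_l, 'rV[F]_(nn i))
  (beta_indep : forall j i, fq_indep theta (fun c => beta j i ord0 c) setT)
  (f : 'I_s -> {poly F}) (hf : forall j, (size (f j) <= k)%N)
  (e : 'I_s -> forall i : 'I_l, 'rV[F]_(nn i))
  (t : nat) (ht : sumrank_wt theta e = t)
  (* an error decomposition e_j^(i) = a^(i) B_j^(i) *)
  (tt : 'I_l -> nat)
  (htt : forall i, tt i = rkq theta (fun p : 'I_s * 'I_(nn i) => e p.1 i ord0 p.2))
  (a : forall i : 'I_l, 'rV[F]_(tt i))
  (a_indep : forall i, fq_indep theta (fun c => a i ord0 c) setT)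
  (B : 'I_s -> forall i : 'I_l, 'M[F]_(tt i, nn i))
  (B_Fq : forall j i r c, theta (B j i r c) = B j i r c)
  (B_rank : forall i,
     \rank (@mxrow F s (fun _ : 'I_s => nn i) (tt i) (fun j => B j i)) = tt i)
  (e_dec : forall j i, e j i = a i *m B j i)
  (* error-span polynomial *)
  (sigma : {poly F})
  (hsigma : minimal_monic
     (fun g => forall i c, opeval theta delta g (xi i) (a i ord0 c) = 0) sigma)
  (* minimal skew polynomials *)
  (G : 'I_s -> {poly F})
  (hG : forall j, minimal_monic
     (fun g => forall i c, opeval theta delta g (xi i) (beta j i ord0 c) = 0) (G j))
  (* interpolation polynomials of y = c + e *)
  (R : 'I_s -> {poly F})
  (R_deg : forall j, (size (R j) <= \sum_(i < l) nn i)%N)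
  (R_int : forall j i, bev theta delta xi (R j) (beta j) i
                     = bev theta delta xi (f j) (beta j) i + e j i) :
  forall j : 'I_s,
    congr_r theta delta (smul theta delta sigma (R j))
                        (smul theta delta sigma (f j)) (G j).
Proof.
move=> j; apply: (minimal_monic_congr_r (hG j)).
- by move=> g h Pg Ph i c; rewrite opevalB Pg Ph subrr.
- move=> Q g Pg i c.
  by rewrite (opeval_smul delta_add delta_mul) Pg (opeval_pt0 _ delta_add).
move=> i c; rewrite opevalB !(opeval_smul delta_add delta_mul).
have := congr1 (fun M : 'M[F]_(1, nn i) => M ord0 c) (R_int j i); rewrite /bev !mxE => ->.
have sigma_e0 := opeval_fixed_comb_root delta_add delta_mul (hsigma.2.1 i) (B_Fq j i ^~ c).
by rewrite (opeval_ptD _ delta_add) addrAC subrr add0r e_dec mxE.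
Qed.
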